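(* Let $(V,g)$ be a Euclidean vector space of dimension $n\ge3$, $N=\frac{(n-1)(n+2)}{2}$, $\theta>-1$. Let $R$ be an algebraic curvature tensor on $V$ with Ricci tensor $\operatorname{Ric}$, and $\mathring{R}$ its induced curvature operator of the second kind with eigenvalue average $\bar\lambda$. (1) If $\mathring{R}\in\mathcal{C}(\alpha,\theta)$ with $1\le\alpha\le n$, then $\operatorname{Ric}\ge\frac{n-1}{\alpha+1}(1-\alpha\theta)\bar\lambda\, g$. (2) If $\mathring{R}\in\mathcal{C}(\alpha,\theta)$ with $n\le\alpha<N$, then $\operatorname{Ric}\ge(n-1)\frac{n^2-n(\alpha\theta+\alpha-1)+2(\alpha\theta-1)}{n^2+n-2(\alpha+1)}\bar\lambda\, g$. Moreover, strict inequalities hold if $\mathring{R}\in\mathring{\mathcal{C}}(\alpha,\theta)$.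
   Context: $S^2_0(V)$ is the space of traceless symmetric two-tensors (dimension $N$). An algebraic curvature tensor is $R\in S^2(\wedge^2V)$ satisfying the first Bianchi identity. $\mathring{R}=\pi\circ\overline{R}:S^2_0(V)\to S^2_0(V)$ with $\overline{R}(h)_{ij}=\sum_{k,l}R_{iklj}h_{kl}$ and $\pi$ the projection onto traceless tensors. For a symmetric operator with eigenvalues $\lambda_1\le\cdots\le\lambda_N$ and average $\bar\lambda$, write $\lambda_1+\cdots+\lambda_\alpha:=\lambda_1+\cdots+\lambda_{[\alpha]}+(\alpha-[\alpha])\lambda_{[\alpha]+1}$; $\mathcal{C}(\alpha,\theta)$ is the cone of symmetric operators on $S^2_0(V)$ with $\alpha^{-1}(\lambda_1+\cdots+\lambda_\alpha)\ge-\theta\bar\lambda$, and $\mathring{\mathcal{C}}(\alpha,\theta)$ its interior. *)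

From HB Require Import structures.
From mathcomp Require Import all_boot all_order all_algebra.
From mathcomp Require Import reals.
Set Implicit Arguments. Unset Strict Implicit. Unset Printing Implicit Defensive.
Import Order.TTheory GRing.Theory Num.Theory.
Local Open Scope ring_scope.

(* V = R^n with the standard Euclidean inner product (orthonormal basis e_1..e_n).
   Tensors are given by their components in that basis. *)

Section Defs.
Variable R : realType.
Variable n : nat.

Definition tensor4 := 'I_n -> 'I_n -> 'I_n -> 'I_n -> R.

(* N = dim S^2_0(V) = (n-1)(n+2)/2 *)
Definition dimS20 (m : nat) : nat := ((m.-1) * (m + 2))./2.

(* algebraic curvature tensor: R in S^2(Lambda^2 V) + first Bianchi identity.
   Sign convention: R_{ijij} is the sectional curvature of span(e_i,e_j). *)
Definition is_alg_curv (Rt : tensor4) : Prop :=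
  forall i j k l,
    [/\ Rt i j k l = - Rt j i k l,
        Rt i j k l = - Rt i j l k,
        Rt i j k l = Rt k l i j &
        Rt i j k l + Rt j k i l + Rt k i j l = 0].

Definition Ric (Rt : tensor4) : 'M[R]_n := \matrix_(j, l) \sum_i Rt i j i l.

Definition Rbar (Rt : tensor4) (h : 'M[R]_n) : 'M[R]_n :=
  \matrix_(i, j) \sum_k \sum_l Rt i k l j * h k l.

Definition proj0 (A : 'M[R]_n) : 'M[R]_n := A - (\tr A / n%:R) *: 1%:M.

Definition Rring (Rt : tensor4) (h : 'M[R]_n) : 'M[R]_n := proj0 (Rbar Rt h).

Definition frob (A B : 'M[R]_n) : R := \tr (A *m B^T).

Definition sorted_eigbasis (Rt : tensor4) (h : 'I_(dimS20 n) -> 'M[R]_n)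
  (lam : 'I_(dimS20 n) -> R) : Prop :=
  [/\ forall a, (h a)^T = h a /\ \tr (h a) = 0,
      forall a b, frob (h a) (h b) = (a == b)%:R,
      forall a, Rring Rt (h a) = lam a *: h a &
      forall a b : 'I_(dimS20 n), (a <= b)%N -> lam a <= lam b].

Definition lamseq (lam : 'I_(dimS20 n) -> R) : seq R := [seq lam i | i <- enum 'I_(dimS20 n)].

(* lam_1 + ... + lam_alpha := lam_1 + ... + lam_[alpha] + (alpha - [alpha]) lam_{[alpha]+1} *)
Definition psum (lam : 'I_(dimS20 n) -> R) (alpha : R) : R :=
  \sum_(k < Num.truncn alpha) nth 0 (lamseq lam) k
  + (alpha - (Num.truncn alpha)%:R) * nth 0 (lamseq lam) (Num.truncn alpha).

Definition lambar (lam : 'I_(dimS20 n) -> R) : R :=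
  (\sum_i lam i) / (dimS20 n)%:R.

Definition inC (lam : 'I_(dimS20 n) -> R) (alpha theta : R) : Prop :=
  alpha^-1 * psum lam alpha >= - theta * lambar lam.

Definition inCint (lam : 'I_(dimS20 n) -> R) (alpha theta : R) : Prop :=
  alpha^-1 * psum lam alpha > - theta * lambar lam.

Definition form_ge (A : 'M[R]_n) (c : R) : Prop :=
  forall v : 'cV[R]_n, c * (v^T *m v) 0 0 <= (v^T *m A *m v) 0 0.
Definition form_gt (A : 'M[R]_n) (c : R) : Prop :=
  forall v : 'cV[R]_n, v != 0 -> c * (v^T *m v) 0 0 < (v^T *m A *m v) 0 0.

End Defs.

(* For a unit vector u, test the curvature operator of the second kind against
   the traceless parts of u e_m + e_m u (summed over m) and of u u.  Since the
   orthonormal eigentensors h_a span all N traceless symmetric tensors (a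
   dimension count), Parseval expresses sum_a lam_a |h_a u|^2 and
   sum_a lam_a <h_a u, u>^2 through Ric(u, u) and the scalar curvature, and
   gives sum_a |h_a u|^2 and sum_a <h_a u, u>^2 outright.  The weights
     d_a = (1 - C) (2 A (|h_a u|^2 - <h_a u, u>^2) + n/(n-1) <h_a u, u>^2) + C
   lie in [0, 1] (by Cauchy-Schwarz and |h_a| = 1) and sum to alpha for
   A = (alpha - 1)/(n - 1), C = 0 if alpha <= n, and A = 1,
   C = (alpha - n)/(N - n) if alpha >= n.  Ky Fan's inequality
   lam_1 + ... + lam_alpha <= sum_a lam_a d_a then turns the cone condition into
   a lower bound for Ric(u, u). *)

From HB Require Import structures.
From mathcomp Require Import all_boot all_order all_algebra.
From mathcomp Require Import reals ring lra zify.
Set Implicit Arguments. Unset Strict Implicit. Unset Printing Implicit Defensive.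
Import Order.TTheory GRing.Theory Num.Theory.
Local Open Scope ring_scope.

Lemma dimS20E (R : numFieldType) n : (0 < n)%N ->
  (dimS20 n)%:R = (n%:R - 1) * (n%:R + 2) / 2 :> R.
Proof.
case: n => [//|m] _; rewrite /dimS20 /=.
have even : ~~ odd (m * (m.+1 + 2)) by rewrite oddM addn2 /=; case: (odd m).
have e : 2 * ((m * (m.+1 + 2))./2)%:R = (m * (m.+1 + 2))%:R :> R.
  by rewrite -natrM mul2n even_halfK.
apply: (@mulfI _ 2); first by rewrite pnatr_eq0.
by rewrite e natrM !natrD -addn1 natrD; field.
Qed.

Lemma natr_lt_dimS20 (R : realFieldType) n : (2 < n)%N -> n%:R < (dimS20 n)%:R :> R.
Proof.
move=> n_gt2; have n_ge3 : 3 <= n%:R :> R by rewrite (ler_nat R 3 n).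
rewrite (dimS20E R (ltnW (ltnW n_gt2))) -subr_gt0.
rewrite (_ : _ - _ = (n%:R - 2) * (n%:R + 1) / 2).
  by apply: divr_gt0; [apply: mulr_gt0|]; lra.
by field.
Qed.

Definition upper_entry (i j : nat) := (i <= j)%N && (0 < j)%N.

Lemma sum_upper_entry m :
  (\sum_(i < m) \sum_(j < m) upper_entry i j = dimS20 m)%N.
Proof.
suff: ((\sum_(i < m) \sum_(j < m) upper_entry i j).*2 = m.-1 * (m + 2))%N.
  by rewrite /dimS20 => <-; rewrite doubleK.
elim: m => [|m IH]; first by rewrite big_ord0.
have last_row : (\sum_(j < m.+1) upper_entry m j = (0 < m))%N.
  rewrite big_ord_recr big1 /= => [|j _]; rewrite /upper_entry ?leqnn //.
  by rewrite leqNgt ltn_ord.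
have last_col : (\sum_(i < m) upper_entry i m = m * (0 < m))%N.
  rewrite -[X in (X * _)%N]card_ord -sum_nat_const; apply: eq_bigr => i _.
  by rewrite /upper_entry (ltnW (ltn_ord i)).
rewrite big_ord_recr /= last_row; under eq_bigr do rewrite big_ord_recr /=.
rewrite big_split /= last_col !doubleD IH.
case: m {IH last_row last_col} => [|m] //=; rewrite -!muln2; lia.
Qed.

Section Frobenius.
Variables (R : realType) (n : nat).
Implicit Types A B C : 'M[R]_n.

Lemma frobE A B : frob A B = \sum_i \sum_j A i j * B i j.
Proof.
rewrite /frob /mxtrace; apply: eq_bigr => i _; rewrite mxE.
by apply: eq_bigr => j _; rewrite mxE.
Qed.

Lemma frobC A B : frob A B = frob B A.
Proof. by rewrite !frobE; do 2!apply: eq_bigr => ? _; rewrite mulrC. Qed.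

Lemma frobDl A B C : frob (A + B) C = frob A C + frob B C.
Proof. by rewrite /frob mulmxDl mxtraceD. Qed.

Lemma frobZl c A C : frob (c *: A) C = c * frob A C.
Proof. by rewrite /frob -scalemxAl mxtraceZ. Qed.

Lemma frobNl A C : frob (- A) C = - frob A C.
Proof. by rewrite /frob mulNmx raddfN. Qed.

Lemma frobBl A B C : frob (A - B) C = frob A C - frob B C.
Proof. by rewrite frobDl frobNl. Qed.

Lemma frobDr A B C : frob C (A + B) = frob C A + frob C B.
Proof. by rewrite frobC frobDl !(frobC C). Qed.

Lemma frobZr c A C : frob C (c *: A) = c * frob C A.
Proof. by rewrite frobC frobZl frobC. Qed.

Lemma frobNr A C : frob C (- A) = - frob C A.
Proof. by rewrite frobC frobNl frobC. Qed.

Lemma frobBr A B C : frob C (A - B) = frob C A - frob C B.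
Proof. by rewrite frobDr frobNr. Qed.

Lemma frob1l A : frob 1%:M A = \tr A.
Proof. by rewrite /frob mul1mx mxtrace_tr. Qed.

Lemma frob1r A : frob A 1%:M = \tr A.
Proof. by rewrite frobC frob1l. Qed.

Lemma frob_suml (I : finType) (F : I -> 'M[R]_n) B :
  frob (\sum_a F a) B = \sum_a frob (F a) B.
Proof. by rewrite /frob mulmx_suml raddf_sum. Qed.

Lemma frob_ge0 A : 0 <= frob A A.
Proof. by rewrite frobE; do 2!apply: sumr_ge0 => ? _; rewrite -expr2 sqr_ge0. Qed.

End Frobenius.

Lemma sum_delta_r (R : nzRingType) (T : finType) (F : T -> R) p :
  \sum_k F k * (k == p)%:R = F p.
Proof.
by rewrite (bigD1 p) //= eqxx mulr1 big1 ?addr0 // => k /negbTE ->; rewrite mulr0.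
Qed.

Section RankBound.
Variable F : fieldType.

Lemma mxrank_sum_le m (I : Type) (r : seq I) (P : pred I) (A : I -> 'M[F]_m) :
  (\rank (\sum_(i <- r | P i) A i)%R <= \sum_(i <- r | P i) \rank (A i))%N.
Proof.
apply: (big_ind2 (fun M k => \rank M <= k)%N) => [|M1 k1 M2 k2 le1 le2|//].
  by rewrite mxrank0.
exact: leq_trans (mxrank_add M1 M2) (leq_add le1 le2).
Qed.

Lemma submx_fixed_low_rank k m (H : 'M[F]_(k, m)) (M : 'M[F]_m) (x : 'rV[F]_m) :
  row_free H -> (\rank M <= k)%N -> H *m M = H -> x *m M = x -> (x <= H)%MS.
Proof.
move=> freeH rkM HM xM.
have HM_sub : (H <= M)%MS by rewrite -HM submxMl.
have MH_sub : (M <= H)%MS.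
  have [_ <-] := mxrank_leqif_sup HM_sub.
  by rewrite eqn_leq mxrankS // (eqnP freeH).
by rewrite -xM (submx_trans (submxMl _ _) MH_sub).
Qed.

End RankBound.

Section SymmetricTracelessSpan.
Variables (R : realType) (n : nat).

Definition upper_mask (A : 'M[R]_n) : 'M[R]_n :=
  \matrix_(i, j) ((upper_entry i j)%:R * A i j).

(* A left inverse of [upper_mask] on symmetric traceless matrices: the masked
   (0, 0) entry is minus the rest of the diagonal. *)
Definition sym_of_upper (Y : 'M[R]_n) : 'M[R]_n :=
  \matrix_(i, j) (Y i j + Y j i - (i == j)%:R * Y i j
                  - ((i == j) && (i == 0 :> nat))%:R * \tr Y).

Lemma sym_of_upper_is_linear : linear sym_of_upper.
Proof. by move=> c A B; apply/matrixP => i j; rewrite !mxE mxtraceD mxtraceZ; ring. Qed.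

HB.instance Definition _ :=
  GRing.isLinear.Build R _ _ _ sym_of_upper sym_of_upper_is_linear.

Lemma upper_maskK psi : psi^T = psi -> \tr psi = 0 ->
  sym_of_upper (upper_mask psi) = psi.
Proof.
move=> psiT psi_tr; apply/matrixP => i j; rewrite !mxE /upper_entry.
have psiC k l : psi l k = psi k l by rewrite -{1}psiT mxE.
case: (ltngtP i j) => [ij|ji|/val_inj ij]; last first.
- subst j; rewrite eqxx /=; case: (posnP i) => [i0|_] /=; last by ring.
  suff -> : \tr (upper_mask psi) = - psi i i by ring.
  rewrite /mxtrace (bigD1 i) //= mxE /upper_entry i0 /= mul0r add0r.
  move/eqP: psi_tr; rewrite /mxtrace (bigD1 i) //= addr_eq0 => /eqP ->.
  rewrite opprK; apply: eq_bigr => k ki; rewrite mxE /upper_entry leqnn lt0n.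
  have -> : (k != 0 :> nat).
    by apply: contra ki => /eqP k0; apply/eqP/val_inj; rewrite /= k0 i0.
  by rewrite mul1r.
- have -> : (i == j) = false by apply/negbTE; rewrite -val_eqE /= gtn_eqF.
  by rewrite (leq_ltn_trans _ ji) //= psiC; ring.
- have -> : (i == j) = false by apply/negbTE; rewrite -val_eqE /= ltn_eqF.
  by rewrite (leq_ltn_trans _ ij) //=; ring.
Qed.

Definition upper_mask_mx : 'M[R]_(n * n) :=
  diag_mx (mxvec (\matrix_(i, j) (upper_entry i j)%:R)).

Lemma mxvec_upper_mask A : mxvec A *m upper_mask_mx = mxvec (upper_mask A).
Proof.
apply/rowP => k; case/mxvec_indexP: k => i j.
by rewrite mul_mx_diag !mxE !mxvecE !mxE mulrC.
Qed.

Lemma rank_upper_mask_mx : (\rank upper_mask_mx <= dimS20 n)%N.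
Proof.
rewrite /upper_mask_mx diag_mx_sum_delta -sum_upper_entry.
apply: leq_trans (mxrank_sum_le _ _ _) _.
rewrite (reindex _ (curry_mxvec_bij _ _)) pair_bigA /=.
apply: leq_sum => -[i j] _ /=; rewrite mxvecE mxE.
by case: upper_entry; rewrite ?scale1r ?mxrank_delta // scale0r mxrank0.
Qed.

Variable h : 'I_(dimS20 n) -> 'M[R]_n.
Hypothesis h_sym : forall a, (h a)^T = h a.
Hypothesis h_tr : forall a, \tr (h a) = 0.
Hypothesis h_orth : forall a b, frob (h a) (h b) = (a == b)%:R.

Definition basis_mx : 'M[R]_(dimS20 n, n * n) := \matrix_(a, k) mxvec (h a) 0 k.

Lemma row_basis_mx a : row a basis_mx = mxvec (h a).
Proof. by apply/rowP => k; rewrite !mxE. Qed.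

Lemma basis_mx_row_free : row_free basis_mx.
Proof.
have gram : basis_mx *m basis_mx^T = 1%:M.
  apply/matrixP => a b; rewrite !mxE -h_orth frobE.
  rewrite (reindex _ (curry_mxvec_bij _ _)) pair_bigA /=.
  by apply: eq_bigr => -[i j] _; rewrite !mxE !mxvecE.
rewrite /row_free eqn_leq rank_leq_row -{1}(mxrank1 R (dimS20 n)) -gram.
exact: mxrankM_maxl.
Qed.

Lemma sym_traceless_submx psi : psi^T = psi -> \tr psi = 0 ->
  (mxvec psi <= basis_mx)%MS.
Proof.
pose M := upper_mask_mx *m lin_mx sym_of_upper.
have fixM A : A^T = A -> \tr A = 0 -> mxvec A *m M = mxvec A.
  by move=> AT A_tr; rewrite mulmxA mxvec_upper_mask mul_vec_lin /= upper_maskK.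
move=> psiT psi_tr; apply: (submx_fixed_low_rank (M := M)) (fixM _ psiT psi_tr).
- exact: basis_mx_row_free.
- exact: leq_trans (mxrankM_maxl _ _) rank_upper_mask_mx.
- by apply/row_matrixP => a; rewrite row_mul row_basis_mx fixM.
Qed.

Lemma sym_traceless_expand psi : psi^T = psi -> \tr psi = 0 ->
  psi = \sum_a frob psi (h a) *: h a.
Proof.
move=> psiT psi_tr; have /submxP[D psiD] := sym_traceless_submx psiT psi_tr.
have psiE : psi = \sum_a D 0 a *: h a.
  apply: (can_inj mxvecK); rewrite psiD mulmx_sum_row linear_sum.
  by apply: eq_bigr => a _; rewrite row_basis_mx linearZ.
have coordE b : frob psi (h b) = D 0 b.
  rewrite {1}psiE frob_suml (eq_bigr (fun a => D 0 a * (a == b)%:R)) ?sum_delta_r //.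
  by move=> a _; rewrite frobZl h_orth.
by rewrite {1}psiE; apply: eq_bigr => a _; rewrite coordE.
Qed.

End SymmetricTracelessSpan.

Section CurvatureOperator.
Variables (R : realType) (n : nat) (Rt : tensor4 R n).
Implicit Types A B : 'M[R]_n.

Lemma Rbar_is_linear : linear (Rbar Rt).
Proof.
move=> c A B; apply/matrixP => i j; rewrite !mxE mulr_sumr -big_split /=.
apply: eq_bigr => k _; rewrite mulr_sumr -big_split /=; apply: eq_bigr => l _.
by rewrite !mxE; ring.
Qed.

HB.instance Definition _ := GRing.isLinear.Build R _ _ _ (Rbar Rt) Rbar_is_linear.

Lemma proj0_is_linear : linear (@proj0 R n).
Proof.
move=> c A B; rewrite /proj0 mxtraceD mxtraceZ.
by apply/matrixP => i j; rewrite !mxE; ring.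
Qed.

HB.instance Definition _ := GRing.isLinear.Build R _ _ _ (@proj0 R n) proj0_is_linear.

Lemma Rring_is_linear : linear (Rring Rt).
Proof. by move=> c A B; rewrite /Rring !linearP. Qed.

HB.instance Definition _ := GRing.isLinear.Build R _ _ _ (Rring Rt) Rring_is_linear.

Hypothesis n_gt0 : (0 < n)%N.

Lemma proj0_sym A : A^T = A -> (proj0 A)^T = proj0 A.
Proof. by move=> AT; rewrite /proj0 linearB linearZ /= trmx1 AT. Qed.

Lemma proj0_tr A : \tr (proj0 A) = 0.
Proof. by rewrite /proj0 linearB linearZ /= mxtrace1 divfK ?subrr // pnatr_eq0 -lt0n. Qed.

Lemma frob_proj0 A B : \tr B = 0 -> frob (proj0 A) B = frob A B.
Proof. by move=> B_tr; rewrite /proj0 frobBl frobZl frob1l B_tr mulr0 subr0. Qed.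

End CurvatureOperator.

Section CurvatureIdentities.
Variables (R : realType) (n : nat) (Rt : tensor4 R n).
Hypothesis Rt_curv : is_alg_curv Rt.
Implicit Types A : 'M[R]_n.

Lemma curv_antisym_l i j k l : Rt i j k l = - Rt j i k l.
Proof. by case: (Rt_curv i j k l). Qed.

Lemma curv_antisym_r i j k l : Rt i j k l = - Rt i j l k.
Proof. by case: (Rt_curv i j k l). Qed.

Lemma curv_pair_sym i j k l : Rt i j k l = Rt k l i j.
Proof. by case: (Rt_curv i j k l). Qed.

Lemma Ric_sym : (Ric Rt)^T = Ric Rt.
Proof.
by apply/matrixP => i j; rewrite !mxE; apply: eq_bigr => k _; apply: curv_pair_sym.
Qed.

Lemma Rbar1 : Rbar Rt 1%:M = - Ric Rt.
Proof.
apply/matrixP => i j; rewrite !mxE -sumrN; apply: eq_bigr => k _.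
under eq_bigr do rewrite mxE eq_sym.
by rewrite sum_delta_r curv_antisym_l.
Qed.

Lemma frob_Rbar_1 A : frob (Rbar Rt A) 1%:M = - frob (Ric Rt) A.
Proof.
rewrite frob1r frobE /mxtrace -sumrN; under eq_bigr do rewrite mxE.
rewrite exchange_big /=; apply: eq_bigr => k _.
rewrite -sumrN; under [RHS]eq_bigr do rewrite mxE mulr_suml.
rewrite exchange_big /=; apply: eq_bigr => l _.
by rewrite -sumrN; apply: eq_bigr => i _; rewrite curv_antisym_r mulNr.
Qed.

End CurvatureIdentities.

Section EigenExpansion.
Variables (R : realType) (n : nat) (Rt : tensor4 R n).
Variables (h : 'I_(dimS20 n) -> 'M[R]_n) (lam : 'I_(dimS20 n) -> R).
Hypothesis h_sym : forall a, (h a)^T = h a.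
Hypothesis h_tr : forall a, \tr (h a) = 0.
Hypothesis h_orth : forall a b, frob (h a) (h b) = (a == b)%:R.
Hypothesis h_eig : forall a, Rring Rt (h a) = lam a *: h a.

Lemma frob_Rring_expand psi : psi^T = psi -> \tr psi = 0 ->
  frob (Rring Rt psi) psi = \sum_a lam a * frob psi (h a) ^+ 2.
Proof.
move=> psiT psi_tr; rewrite {1}(sym_traceless_expand h_sym h_tr h_orth psiT psi_tr).
rewrite linear_sum frob_suml; apply: eq_bigr => a _.
by rewrite linearZ /= h_eig !frobZl (frobC (h a)); ring.
Qed.

Lemma frob_expand psi : psi^T = psi -> \tr psi = 0 ->
  frob psi psi = \sum_a frob psi (h a) ^+ 2.
Proof.
move=> psiT psi_tr; rewrite {1}(sym_traceless_expand h_sym h_tr h_orth psiT psi_tr).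
by rewrite frob_suml; apply: eq_bigr => a _; rewrite frobZl (frobC (h a)) expr2.
Qed.

Hypothesis Rt_curv : is_alg_curv Rt.
Hypothesis n_gt0 : (0 < n)%N.
Local Notation nR := (n%:R : R).

(* Parseval applied to the traceless part [proj0 phi]. *)
Lemma sum_lam_frob_sym phi : phi^T = phi ->
  \sum_a lam a * frob phi (h a) ^+ 2 =
  frob (Rbar Rt phi) phi + 2 * (\tr phi / nR) * frob (Ric Rt) phi
  - (\tr phi / nR) ^+ 2 * \tr (Ric Rt).
Proof.
move=> phiT; under eq_bigr do rewrite -frob_proj0 //.
rewrite -frob_Rring_expand ?proj0_sym ?proj0_tr //.
rewrite /Rring frob_proj0 ?proj0_tr // /proj0 linearB linearZ /= Rbar1 //.
rewrite !(frobBl, frobZl, frobBr, frobZr, frobNl) frob_Rbar_1 // frob1r.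
by ring.
Qed.

Lemma sum_frob_sym phi : phi^T = phi ->
  \sum_a frob phi (h a) ^+ 2 = frob phi phi - \tr phi ^+ 2 / nR.
Proof.
move=> phiT; under eq_bigr do rewrite -frob_proj0 //.
rewrite -frob_expand ?proj0_sym ?proj0_tr //.
rewrite /proj0 !(frobBl, frobZl, frobBr, frobZr) !frob1r frob1l mxtrace1.
by field; rewrite pnatr_eq0 -lt0n.
Qed.

End EigenExpansion.

Section Vectors.
Variables (R : realType) (n : nat).
Implicit Types (x y z t : 'I_n -> R) (A : 'M[R]_n).

Definition dot x y : R := \sum_i x i * y i.
Definition evec (m : 'I_n) : 'I_n -> R := fun i => (i == m)%:R.
Definition outer x y : 'M[R]_n := \matrix_(i, j) (x i * y j).
Definition mxv A y : 'I_n -> R := fun i => \sum_j A i j * y j.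
Definition qform A x : R := dot x (mxv A x).

Lemma dotC x y : dot x y = dot y x.
Proof. by apply: eq_bigr => i _; rewrite mulrC. Qed.

Lemma dot_evec x m : dot x (evec m) = x m.
Proof. exact: sum_delta_r. Qed.

Lemma dot_evecC x m : dot (evec m) x = x m.
Proof. by rewrite dotC dot_evec. Qed.

Lemma dot_evec_evec m : dot (evec m) (evec m) = 1.
Proof. by rewrite dot_evec /evec eqxx. Qed.

Lemma dot_ge0 x : 0 <= dot x x.
Proof. by apply: sumr_ge0 => i _; rewrite -expr2 sqr_ge0. Qed.

Lemma dot_eq0 x : dot x x = 0 -> x =1 (fun=> 0).
Proof.
move=> /eqP; rewrite psumr_eq0 => [/allP x0 i|i _]; last by rewrite -expr2 sqr_ge0.
by have := x0 i (mem_index_enum _); rewrite /= mulf_eq0 orbb => /eqP.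
Qed.

Lemma dotZ c x : dot (fun i => c * x i) (fun i => c * x i) = c ^+ 2 * dot x x.
Proof. by rewrite /dot mulr_sumr; apply: eq_bigr => i _; ring. Qed.

Lemma mxv_evec A m i : mxv A (evec m) i = A i m.
Proof. exact: sum_delta_r. Qed.

Lemma qform_evec A m : qform A (evec m) = A m m.
Proof. by rewrite /qform dot_evecC mxv_evec. Qed.

Lemma dot_mxv_sym A x y : A^T = A -> dot x (mxv A y) = dot y (mxv A x).
Proof.
move=> AT; rewrite /dot /mxv; under eq_bigr do rewrite mulr_sumr.
under [RHS]eq_bigr do rewrite mulr_sumr.
rewrite exchange_big; do 2!apply: eq_bigr => ? _.
by rewrite -[in RHS]AT mxE; ring.
Qed.

Lemma qformZ c A x : qform A (fun i => c * x i) = c ^+ 2 * qform A x.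
Proof.
rewrite /qform /dot /mxv mulr_sumr; apply: eq_bigr => i _.
by rewrite !mulr_sumr; apply: eq_bigr => j _; ring.
Qed.

Lemma frob_outer x y A : frob (outer x y) A = dot x (mxv A y).
Proof.
rewrite frobE; apply: eq_bigr => i _; rewrite mulr_sumr.
by apply: eq_bigr => j _; rewrite mxE; ring.
Qed.

Lemma frob_outer_outer x y z t : frob (outer x y) (outer z t) = dot x z * dot y t.
Proof.
rewrite frob_outer /dot mulr_suml; apply: eq_bigr => i _.
by rewrite /mxv !mulr_sumr; apply: eq_bigr => j _; rewrite mxE; ring.
Qed.

Lemma tr_outer x y : \tr (outer x y) = dot x y.
Proof. by apply: eq_bigr => i _; rewrite mxE. Qed.

Lemma outer_tr x y : (outer x y)^T = outer y x.
Proof. by apply/matrixP => i j; rewrite !mxE mulrC. Qed.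

End Vectors.

Arguments evec {R n} m i.

Section CurvatureForm.
Variables (R : realType) (n : nat) (Rt : tensor4 R n).
Hypothesis Rt_curv : is_alg_curv Rt.
Implicit Types (x y z t v : 'I_n -> R).

Definition curv_form x y z t : R :=
  \sum_i \sum_j \sum_k \sum_l Rt i j k l * x i * y j * z k * t l.

Lemma frob_Rbar_outer x y z t :
  frob (Rbar Rt (outer x y)) (outer z t) = curv_form z x y t.
Proof.
rewrite frobE /curv_form; apply: eq_bigr => i _.
under eq_bigr do rewrite !mxE mulr_suml.
rewrite exchange_big; apply: eq_bigr => k _.
under eq_bigr do rewrite mulr_suml.
rewrite exchange_big; apply: eq_bigr => l _.
by apply: eq_bigr => j _; rewrite mxE; ring.
Qed.

Lemma curv_form_swap x y z t : curv_form x y z t = curv_form y x t z.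
Proof.
rewrite /curv_form exchange_big; do 2!apply: eq_bigr => ? _.
rewrite exchange_big; do 2!apply: eq_bigr => ? _.
by rewrite (curv_antisym_l Rt_curv) (curv_antisym_r Rt_curv); ring.
Qed.

Lemma curv_form_diag_l x z t : curv_form x x z t = 0.
Proof.
suff e : curv_form x x z t = - curv_form x x z t by lra.
rewrite {1}/curv_form exchange_big -sumrN; apply: eq_bigr => j _.
rewrite -sumrN; apply: eq_bigr => i _; rewrite -sumrN; apply: eq_bigr => k _.
by rewrite -sumrN; apply: eq_bigr => l _; rewrite (curv_antisym_l Rt_curv j); ring.
Qed.

Lemma sum_curv_form_evec v :
  \sum_m curv_form (evec m) v (evec m) v = qform (Ric Rt) v.
Proof.
have evecE m : curv_form (evec m) v (evec m) v = \sum_j \sum_l Rt m j m l * v j * v l.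
  rewrite /curv_form (bigD1 m) //= [X in _ + X]big1 ?addr0 => [|i /negbTE im]; last first.
    by do 3!apply: big1 => ? _; rewrite /evec im mulr0 !mul0r.
  apply: eq_bigr => j _; rewrite (bigD1 m) //= [X in _ + X]big1 ?addr0 => [|k /negbTE km].
    by apply: eq_bigr => l _; rewrite /evec eqxx !mulr1.
  by apply: big1 => l _; rewrite /evec km mulr0 !mul0r.
under eq_bigr do rewrite evecE.
rewrite exchange_big; apply: eq_bigr => j _; rewrite /mxv mulr_sumr exchange_big.
by apply: eq_bigr => l _; rewrite mxE mulr_suml mulr_sumr; apply: eq_bigr => i _; ring.
Qed.

End CurvatureForm.

Section TestTensors.
Variables (R : realType) (n : nat) (Rt : tensor4 R n).
Variables (h : 'I_(dimS20 n) -> 'M[R]_n) (lam : 'I_(dimS20 n) -> R).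
Hypothesis h_sym : forall a, (h a)^T = h a.
Hypothesis h_tr : forall a, \tr (h a) = 0.
Hypothesis h_orth : forall a b, frob (h a) (h b) = (a == b)%:R.
Hypothesis h_eig : forall a, Rring Rt (h a) = lam a *: h a.
Hypothesis Rt_curv : is_alg_curv Rt.
Hypothesis n_gt0 : (0 < n)%N.
Local Notation nR := (n%:R : R).
Local Notation S := (\tr (Ric Rt)).
Implicit Types (v : 'I_n -> R) (m : 'I_n).

Let nR_neq0 : nR != 0. Proof. by rewrite pnatr_eq0 -lt0n. Qed.

Definition sym_outer v m : 'M[R]_n := outer v (evec m) + outer (evec m) v.

Lemma sym_outer_sym v m : (sym_outer v m)^T = sym_outer v m.
Proof. by rewrite linearD /= !outer_tr addrC. Qed.

Lemma tr_sym_outer v m : \tr (sym_outer v m) = 2 * v m.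
Proof. by rewrite mxtraceD !tr_outer dot_evec dot_evecC; ring. Qed.

Lemma frob_sym_outer v m A : A^T = A -> frob (sym_outer v m) A = 2 * mxv A v m.
Proof.
move=> AT; rewrite frobDl !frob_outer dot_evecC.
have -> : dot v (mxv A (evec m)) = mxv A v m.
  by apply: eq_bigr => i _; rewrite mxv_evec -[in LHS]AT mxE mulrC.
by ring.
Qed.

Lemma frob_sym_outer_self v m :
  frob (sym_outer v m) (sym_outer v m) = 2 * dot v v + 2 * v m ^+ 2.
Proof.
rewrite !(frobDl, frobDr) !frob_outer_outer !dot_evec !dot_evecC /evec eqxx.
by rewrite mulr1 mul1r; ring.
Qed.

Lemma sum_frob_Rbar_sym_outer v :
  \sum_m frob (Rbar Rt (sym_outer v m)) (sym_outer v m) = 2 * qform (Ric Rt) v.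
Proof.
under eq_bigr do rewrite linearD /= !(frobDl, frobDr) !frob_Rbar_outer.
under eq_bigr do rewrite !curv_form_diag_l //.
under eq_bigr => m _ do rewrite (curv_form_swap Rt_curv v) add0r addr0.
by rewrite big_split /= sum_curv_form_evec; ring.
Qed.

Lemma sqnorm_mxv_sym_outer v a :
  dot (mxv (h a) v) (mxv (h a) v) = (\sum_m frob (sym_outer v m) (h a) ^+ 2) / 4.
Proof. by rewrite mulr_suml; apply: eq_bigr => m _; rewrite frob_sym_outer //; field. Qed.

Lemma sum_lam_sqnorm_mxv v :
  \sum_a lam a * dot (mxv (h a) v) (mxv (h a) v) =
  (nR + 4) / (2 * nR) * qform (Ric Rt) v - dot v v * S / nR ^+ 2.
Proof.
have -> : \sum_a lam a * dot (mxv (h a) v) (mxv (h a) v) =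
    (\sum_m \sum_a lam a * frob (sym_outer v m) (h a) ^+ 2) / 4.
  rewrite exchange_big mulr_suml; apply: eq_bigr => a _.
  by rewrite sqnorm_mxv_sym_outer -mulr_sumr mulrA.
under eq_bigr do rewrite (sum_lam_frob_sym h_sym h_tr h_orth h_eig) ?sym_outer_sym //.
rewrite (eq_bigr (fun m => frob (Rbar Rt (sym_outer v m)) (sym_outer v m)
    + 8 / nR * (v m * mxv (Ric Rt) v m) - 4 * S / nR ^+ 2 * (v m * v m))) => [|m _].
  rewrite sumrB big_split /= -!mulr_sumr sum_frob_Rbar_sym_outer -/(dot v v).
  by rewrite -/(dot v (mxv (Ric Rt) v)) -/(qform (Ric Rt) v); field.
by rewrite tr_sym_outer (frobC (Ric Rt)) frob_sym_outer ?Ric_sym //; field.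
Qed.

Lemma sum_sqnorm_mxv v :
  \sum_a dot (mxv (h a) v) (mxv (h a) v) = (nR - 1) * (nR + 2) / (2 * nR) * dot v v.
Proof.
under eq_bigr do rewrite sqnorm_mxv_sym_outer.
rewrite -mulr_suml exchange_big /=.
under eq_bigr do rewrite (sum_frob_sym h_sym h_tr h_orth) ?sym_outer_sym //.
rewrite (eq_bigr (fun m => 2 * dot v v + (2 - 4 / nR) * (v m * v m))) => [|m _].
  rewrite big_split /= sumr_const card_ord -mulr_sumr -/(dot v v).
  by rewrite -[(2 * dot v v) *+ n]mulr_natr; field.
by rewrite frob_sym_outer_self tr_sym_outer; field.
Qed.

Lemma sum_lam_qform_sqr v :
  \sum_a lam a * qform (h a) v ^+ 2 =
  2 * dot v v * qform (Ric Rt) v / nR - dot v v ^+ 2 * S / nR ^+ 2.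
Proof.
under eq_bigr do rewrite /qform -frob_outer.
rewrite (sum_lam_frob_sym h_sym h_tr h_orth h_eig) ?outer_tr //.
rewrite frob_Rbar_outer curv_form_diag_l // tr_outer frobC frob_outer.
by rewrite -/(qform (Ric Rt) v); field.
Qed.

Lemma sum_qform_sqr v : \sum_a qform (h a) v ^+ 2 = (nR - 1) / nR * dot v v ^+ 2.
Proof.
under eq_bigr do rewrite /qform -frob_outer.
rewrite (sum_frob_sym h_sym h_tr h_orth) ?outer_tr // frob_outer_outer tr_outer.
by field.
Qed.

Lemma sum_lam : \sum_a lam a = (nR + 2) / (2 * nR) * S.
Proof.
have sqnorm_mxv_evec a : \sum_p dot (mxv (h a) (evec p)) (mxv (h a) (evec p)) = 1.
  transitivity (frob (h a) (h a)); last by rewrite h_orth eqxx.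
  by rewrite frobE exchange_big; do 2!apply: eq_bigr => ? _; rewrite !mxv_evec.
transitivity (\sum_p \sum_a lam a * dot (mxv (h a) (evec p)) (mxv (h a) (evec p))).
  by rewrite exchange_big; apply: eq_bigr => a _; rewrite -mulr_sumr sqnorm_mxv_evec mulr1.
rewrite (eq_bigr _ (fun p _ => sum_lam_sqnorm_mxv (evec p))) /=.
under eq_bigr do rewrite qform_evec dot_evec_evec.
rewrite sumrB -mulr_sumr sumr_const card_ord -[_ *+ n]mulr_natr.
by rewrite -/(mxtrace _); field.
Qed.

End TestTensors.

Section UnitVectorBounds.
Variables (R : realType) (n : nat).
Implicit Types (x y v : 'I_n -> R) (A : 'M[R]_n).
Local Notation nR := (n%:R : R).

Lemma dot_sqr_le_unit x y : dot x x = 1 -> dot x y ^+ 2 <= dot y y.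
Proof.
move=> x1; have expand c :
    \sum_i (y i - c * x i) ^+ 2 = dot y y - 2 * c * dot x y + c ^+ 2 * dot x x.
  by rewrite /dot !mulr_sumr -sumrB -big_split; apply: eq_bigr => i _ /=; ring.
have : 0 <= \sum_i (y i - dot x y * x i) ^+ 2 by apply: sumr_ge0 => i _; apply: sqr_ge0.
by rewrite expand x1; lra.
Qed.

(* Expand [0 <= |M|^2] for the traceless part M of P A P, P = I - v v^T. *)
Lemma sym_traceless_unit_bound A v : (1 < n)%N -> A^T = A -> \tr A = 0 ->
  dot v v = 1 ->
  2 * (dot (mxv A v) (mxv A v) - qform A v ^+ 2) + nR / (nR - 1) * qform A v ^+ 2
  <= frob A A.
Proof.
move=> n_gt1 AT A_tr v1.
have n1_neq0 : nR - 1 != 0 by rewrite subr_eq0 pnatr_eq1 gtn_eqF.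
set w := mxv A v; set s := qform A v; set p := dot w w.
have Aw : dot v (mxv A w) = p by rewrite dot_mxv_sym.
have vw : dot w v = s by rewrite dotC.
have := frob_ge0 (A - outer w v - outer v w + (s * (nR - 2) / (nR - 1)) *: outer v v
                  + (s / (nR - 1)) *: 1%:M).
rewrite !(frobDl, frobNl, frobZl, frobDr, frobNr, frobZr) !frob1r !frob1l.
rewrite !(frobC A (outer _ _)) !frob_outer_outer !frob_outer.
rewrite !tr_outer A_tr mxtrace1 Aw vw -/s -/p v1 (dotC v w) vw.
rewrite [X in 0 <= X -> _](_ : _ = frob A A - (2 * (p - s ^+ 2) + nR / (nR - 1) * s ^+ 2)).
  by rewrite subr_ge0.
by field.
Qed.

End UnitVectorBounds.

Section KyFan.
Variables (R : realType) (n : nat) (lam : 'I_(dimS20 n) -> R) (alpha : R).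
Local Notation N := (dimS20 n).
Hypothesis lam_sorted : forall a b : 'I_N, (a <= b)%N -> lam a <= lam b.
Hypothesis alpha_ge0 : 0 <= alpha.
Hypothesis alpha_lt : alpha < N%:R.

Lemma nth_lamseq (a : 'I_N) : nth 0 (lamseq lam) a = lam a.
Proof. by rewrite /lamseq (nth_map a) ?size_enum_ord // nth_ord_enum. Qed.

Local Notation k := (Num.truncn alpha).

Lemma truncn_lt_dim : (k < N)%N.
Proof.
have /andP[k_le _] := truncn_itv alpha_ge0.
by rewrite -(ltr_nat R); apply: le_lt_trans k_le alpha_lt.
Qed.

Local Notation K := (Ordinal truncn_lt_dim).

Definition greedy_weight (a : 'I_N) : R :=
  if (a < k)%N then 1 else if a == K then alpha - k%:R else 0.

Lemma sum_greedy_weight (g : 'I_N -> R) :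
  \sum_a g a * greedy_weight a = \sum_(a < N | (a < k)%N) g a + (alpha - k%:R) * g K.
Proof.
rewrite (bigID (fun a : 'I_N => a < k)%N) /=; congr (_ + _).
  by apply: eq_bigr => a ak; rewrite /greedy_weight ak mulr1.
rewrite (bigD1 K) /= ?ltnn // big1 ?addr0 => [|a /andP[ak aK]].
  by rewrite /greedy_weight ltnn eqxx mulrC.
by rewrite /greedy_weight (negbTE ak) (negbTE aK) mulr0.
Qed.

Lemma psum_greedy : psum lam alpha = \sum_a lam a * greedy_weight a.
Proof.
rewrite sum_greedy_weight /psum (big_ord_widen N (fun i => nth 0 (lamseq lam) i)) //.
  rewrite -[X in nth _ _ X]/(nat_of_ord K) !nth_lamseq.
  by under eq_bigr do rewrite nth_lamseq.
exact: ltnW truncn_lt_dim.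
Qed.

Lemma sum_greedy : \sum_a greedy_weight a = alpha.
Proof.
under eq_bigr do rewrite -[greedy_weight _]mul1r.
rewrite sum_greedy_weight -(big_ord_widen N (fun=> 1)) ?(ltnW truncn_lt_dim) //.
by rewrite sumr_const card_ord mulr1 addrC subrK.
Qed.

Lemma psum_le_weighted (d : 'I_N -> R) : (forall a, 0 <= d a <= 1) ->
  \sum_a d a = alpha -> psum lam alpha <= \sum_a lam a * d a.
Proof.
move=> d01 d_sum; rewrite psum_greedy -subr_ge0.
have -> : \sum_a lam a * d a - \sum_a lam a * greedy_weight a =
    \sum_a (lam a - lam K) * (d a - greedy_weight a).
  under [RHS]eq_bigr do rewrite mulrBl.
  rewrite sumrB -mulr_sumr sumrB d_sum sum_greedy subrr mulr0 subr0 -sumrB.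
  by apply: eq_bigr => a _; rewrite mulrBr.
apply: sumr_ge0 => a _; have /andP[d0 d1] := d01 a; rewrite /greedy_weight.
case: ifP => ak.
  by apply: mulr_le0; rewrite subr_le0 // lam_sorted // ltnW.
case: ifP => [/eqP -> | _]; first by rewrite subrr mul0r.
by rewrite subr0 mulr_ge0 // subr_ge0 lam_sorted // leqNgt ak.
Qed.

End KyFan.

Section FormsOnUnitVectors.
Variables (R : realType) (n : nat) (A : 'M[R]_n).
Local Notation col v := (fun i => v i 0).

Lemma cV_dot (v : 'cV[R]_n) : (v^T *m v) 0 0 = dot (col v) (col v).
Proof. by rewrite mxE; apply: eq_bigr => i _; rewrite mxE. Qed.

Lemma cV_qform (v : 'cV[R]_n) : (v^T *m A *m v) 0 0 = qform A (col v).
Proof.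
rewrite mxE /qform /dot /mxv; under eq_bigr do rewrite mxE mulr_suml.
rewrite exchange_big; apply: eq_bigr => i _; rewrite mulr_sumr.
by apply: eq_bigr => j _; rewrite !mxE mulrA.
Qed.

Lemma qform_normalize x : 0 < dot x x ->
  exists2 u, dot u u = 1 & qform A x = dot x x * qform A u.
Proof.
move=> x_pos; set r := Num.sqrt (dot x x).
have r_neq0 : r != 0 by rewrite sqrtr_eq0 -ltNge.
have r2 : r ^+ 2 = dot x x by rewrite sqr_sqrtr // ltW.
exists (fun i => r^-1 * x i); first by rewrite dotZ exprVn r2 mulVf ?lt0r_neq0.
by rewrite qformZ exprVn r2 mulrA mulfV ?lt0r_neq0 ?mul1r.
Qed.

Lemma form_ge_unit c : (forall u, dot u u = 1 -> c <= qform A u) -> form_ge A c.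
Proof.
move=> c_le v; rewrite cV_dot cV_qform.
have := dot_ge0 (col v); rewrite le_eqVlt => /orP[/eqP x0 | x_pos].
  rewrite -x0 mulr0 /qform /dot big1 // => i _.
  by rewrite (dot_eq0 (esym x0)) mul0r.
by have [u u1 ->] := qform_normalize x_pos; rewrite mulrC ler_pM2l // c_le.
Qed.

Lemma form_gt_unit c : (forall u, dot u u = 1 -> c < qform A u) -> form_gt A c.
Proof.
move=> c_lt v v_neq0; rewrite cV_dot cV_qform.
have x_pos : 0 < dot (col v) (col v).
  rewrite lt_def dot_ge0 andbT; apply: contra v_neq0 => /eqP x0.
  by apply/eqP/matrixP => i j; rewrite (ord1 j) mxE (dot_eq0 x0).
by have [u u1 ->] := qform_normalize x_pos; rewrite mulrC ltr_pM2l // c_lt.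
Qed.

End FormsOnUnitVectors.

Section RicciFromPsum.
Variables (R : realType) (n : nat) (Rt : tensor4 R n).
Variables (lam : 'I_(dimS20 n) -> R) (alpha theta : R).

Lemma inC_psum : 0 < alpha -> inC lam alpha theta ->
  - (alpha * theta * lambar lam) <= psum lam alpha.
Proof.
move=> alpha_gt0; rewrite /inC -(ler_pM2l alpha_gt0) mulVKf ?gt_eqF //.
by rewrite mulNr mulrN mulrA.
Qed.

Lemma inCint_psum : 0 < alpha -> inCint lam alpha theta ->
  - (alpha * theta * lambar lam) < psum lam alpha.
Proof.
move=> alpha_gt0; rewrite /inCint -(ltr_pM2l alpha_gt0) mulVKf ?gt_eqF //.
by rewrite mulNr mulrN mulrA.
Qed.

Lemma Ric_bound_of_psum (K M c : R) :
  0 < alpha -> 0 < K -> K * c + M = - (alpha * theta * lambar lam) ->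
  (forall u, dot u u = 1 -> psum lam alpha <= K * qform (Ric Rt) u + M) ->
  (inC lam alpha theta -> form_ge (Ric Rt) c) /\
  (inCint lam alpha theta -> form_gt (Ric Rt) c).
Proof.
move=> alpha_gt0 K_gt0 KcM psum_le.
split=> [/(inC_psum alpha_gt0) | /(inCint_psum alpha_gt0)] cone.
  apply: form_ge_unit => u u1; rewrite -(ler_pM2l K_gt0) -(lerD2r M) KcM.
  exact: le_trans cone (psum_le u u1).
apply: form_gt_unit => u u1; rewrite -(ltr_pM2l K_gt0) -(ltrD2r M) KcM.
exact: lt_le_trans cone (psum_le u u1).
Qed.

End RicciFromPsum.

Section InterpolatedWeights.
Variables (R : realType) (n : nat) (Rt : tensor4 R n).
Variables (h : 'I_(dimS20 n) -> 'M[R]_n) (lam : 'I_(dimS20 n) -> R).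
Hypothesis h_sym : forall a, (h a)^T = h a.
Hypothesis h_tr : forall a, \tr (h a) = 0.
Hypothesis h_orth : forall a b, frob (h a) (h b) = (a == b)%:R.
Hypothesis h_eig : forall a, Rring Rt (h a) = lam a *: h a.
Hypothesis lam_sorted : forall a b : 'I_(dimS20 n), (a <= b)%N -> lam a <= lam b.
Hypothesis Rt_curv : is_alg_curv Rt.
Hypothesis n_gt2 : (2 < n)%N.
Local Notation nR := (n%:R : R).
Local Notation NR := ((dimS20 n)%:R : R).
Local Notation rho := (qform (Ric Rt)).

Let n_gt1 : (1 < n)%N. Proof. exact: ltnW. Qed.
Let n_gt0 : (0 < n)%N. Proof. exact: ltnW. Qed.
Let nR_neq0 : nR != 0. Proof. by rewrite pnatr_eq0 -lt0n. Qed.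
Let nR1_neq0 : nR - 1 != 0. Proof. by rewrite subr_eq0 pnatr_eq1 gtn_eqF. Qed.
Let nR2_neq0 : nR + 2 != 0.
Proof. by apply: lt0r_neq0; have := ler0n R n; lra. Qed.

Lemma lambarE : lambar lam = \tr (Ric Rt) / (nR * (nR - 1)).
Proof.
rewrite /lambar (sum_lam h_sym h_tr h_orth h_eig) // dimS20E //.
by field; rewrite nR1_neq0 nR_neq0 nR2_neq0.
Qed.

Section Weights.
Variables (A C : R) (u : 'I_n -> R).
Hypothesis u_unit : dot u u = 1.
Hypothesis A01 : 0 <= A <= 1.
Hypothesis C01 : 0 <= C <= 1.

Definition interp_weight a : R :=
  (1 - C) * (A * (2 * (dot (mxv (h a) u) (mxv (h a) u) - qform (h a) u ^+ 2))
             + nR / (nR - 1) * qform (h a) u ^+ 2) + C.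

Lemma interp_weight_01 a : 0 <= interp_weight a <= 1.
Proof.
have sp := dot_sqr_le_unit (mxv (h a) u) u_unit.
have := sym_traceless_unit_bound n_gt1 (h_sym a) (h_tr a) u_unit.
rewrite h_orth eqxx mulr1n -/(qform (h a) u) in sp *.
set p := dot _ _ in sp *; set s2 := qform _ _ ^+ 2 in sp *.
have s2_ge0 : 0 <= s2 by apply: sqr_ge0.
have k_ge0 : 0 <= nR / (nR - 1) by rewrite divr_ge0 ?ler0n // subr_ge0 ler1n.
case/andP: A01 => A0 A1; case/andP: C01 => C0 C1 bound.
pose w := A * (2 * (p - s2)) + nR / (nR - 1) * s2.
have ps_ge0 : 0 <= 2 * (p - s2) by rewrite mulr_ge0 // subr_ge0.
have w_ge0 : 0 <= w by apply: addr_ge0; apply: mulr_ge0.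
have w_le1 : w <= 1.
  have : 0 <= (1 - A) * (2 * (p - s2)) by rewrite mulr_ge0 // subr_ge0.
  by rewrite /w mulrBl mul1r; lra.
have : 0 <= (1 - C) * w by rewrite mulr_ge0 // subr_ge0.
have : 0 <= (1 - C) * (1 - w) by rewrite mulr_ge0 // subr_ge0.
by rewrite /interp_weight -/p -/s2 -/w mulrBr mulr1; lra.
Qed.

Lemma sum_interp_weight :
  \sum_a interp_weight a = (1 - C) * (A * (nR - 1) + 1) + C * NR.
Proof.
rewrite (eq_bigr (fun a => (1 - C) * (2 * A) * dot (mxv (h a) u) (mxv (h a) u)
    + (1 - C) * (nR / (nR - 1) - 2 * A) * qform (h a) u ^+ 2 + C)) => [|a _]; last first.
  by rewrite /interp_weight; ring.
rewrite !big_split /= -!mulr_sumr sumr_const card_ord -[C *+ _]mulr_natr.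
rewrite (sum_sqnorm_mxv h_sym h_tr h_orth) // (sum_qform_sqr h_sym h_tr h_orth) //.
rewrite u_unit dimS20E //.
by field; rewrite nR1_neq0 nR_neq0.
Qed.

Lemma sum_lam_interp_weight :
  \sum_a lam a * interp_weight a =
  (1 - C) * ((A + 2 / (nR - 1)) * rho u - lambar lam) + C * NR * lambar lam.
Proof.
rewrite (eq_bigr (fun a => (1 - C) * (2 * A) * (lam a * dot (mxv (h a) u) (mxv (h a) u))
    + (1 - C) * (nR / (nR - 1) - 2 * A) * (lam a * qform (h a) u ^+ 2)
    + C * lam a)) => [|a _]; last first.
  by rewrite /interp_weight; ring.
rewrite !big_split /= -!mulr_sumr (sum_lam_sqnorm_mxv h_sym h_tr h_orth h_eig) //.
rewrite (sum_lam_qform_sqr h_sym h_tr h_orth h_eig) // (sum_lam h_sym h_tr h_orth h_eig) //.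
rewrite lambarE u_unit dimS20E //.
by field; rewrite nR1_neq0 nR_neq0.
Qed.

Lemma psum_le_interp alpha :
  alpha = (1 - C) * (A * (nR - 1) + 1) + C * NR -> 0 <= alpha -> alpha < NR ->
  psum lam alpha <=
  (1 - C) * ((A + 2 / (nR - 1)) * rho u - lambar lam) + C * NR * lambar lam.
Proof.
move=> alphaE alpha_ge0 alpha_lt; rewrite -sum_lam_interp_weight.
apply: psum_le_weighted => //; first exact: interp_weight_01.
by rewrite sum_interp_weight.
Qed.

End Weights.

Lemma psum_le_small u alpha : dot u u = 1 -> 1 <= alpha <= nR ->
  psum lam alpha <= (alpha + 1) / (nR - 1) * rho u - lambar lam.
Proof.
move=> u1 /andP[alpha_ge1 alpha_le].
have A01 : 0 <= (alpha - 1) / (nR - 1) <= 1.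
  have n_ge3 : 3 <= nR by rewrite (ler_nat R 3 n).
  by apply/andP; split; [apply: divr_ge0 | rewrite ler_pdivrMr]; lra.
have C01 : 0 <= (0 : R) <= 1 by lra.
have -> : (alpha + 1) / (nR - 1) * rho u - lambar lam = (1 - 0) *
    (((alpha - 1) / (nR - 1) + 2 / (nR - 1)) * rho u - lambar lam) + 0 * NR * lambar lam.
  by field.
apply: psum_le_interp => //; first by field.
  by apply: le_trans alpha_ge1; rewrite ler01.
exact: le_lt_trans alpha_le (natr_lt_dimS20 R n_gt2).
Qed.

Lemma psum_le_large u alpha : dot u u = 1 -> nR <= alpha < NR ->
  psum lam alpha <= (NR - alpha) * (nR + 1) / ((NR - nR) * (nR - 1)) * rho u
                    + ((alpha - nR) * NR - (NR - alpha)) / (NR - nR) * lambar lam.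
Proof.
move=> u1 /andP[alpha_ge alpha_lt]; have gap := natr_lt_dimS20 R n_gt2.
have n_ge3 : 3 <= nR by rewrite (ler_nat R 3 n).
have A01 : 0 <= (1 : R) <= 1 by lra.
have C01 : 0 <= (alpha - nR) / (NR - nR) <= 1.
  by apply/andP; split; [apply: divr_ge0 | rewrite ler_pdivrMr]; lra.
have -> : (NR - alpha) * (nR + 1) / ((NR - nR) * (nR - 1)) * rho u
    + ((alpha - nR) * NR - (NR - alpha)) / (NR - nR) * lambar lam =
  (1 - (alpha - nR) / (NR - nR)) * ((1 + 2 / (nR - 1)) * rho u - lambar lam)
    + (alpha - nR) / (NR - nR) * NR * lambar lam by field; lra.
apply: psum_le_interp => //; first by field; lra.
by apply: le_trans alpha_ge; rewrite ler0n.
Qed.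

Lemma Ric_bound_small alpha theta : 1 <= alpha <= nR ->
  let c := (nR - 1) / (alpha + 1) * (1 - alpha * theta) * lambar lam in
  (inC lam alpha theta -> form_ge (Ric Rt) c) /\
  (inCint lam alpha theta -> form_gt (Ric Rt) c).
Proof.
move=> /[dup] /andP[alpha_ge1 _] alpha_range c.
have n_ge3 : 3 <= nR by rewrite (ler_nat R 3 n).
apply: (Ric_bound_of_psum (K := (alpha + 1) / (nR - 1)) (M := - lambar lam)).
- lra.
- by apply: divr_gt0; lra.
- by rewrite /c; field; lra.
- by move=> u u1; apply: psum_le_small.
Qed.

Lemma Ric_bound_large alpha theta : nR <= alpha < NR ->
  let c := (nR - 1) *
      ((nR ^+ 2 - nR * (alpha * theta + alpha - 1) + 2 * (alpha * theta - 1))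
       / (nR ^+ 2 + nR - 2 * (alpha + 1))) * lambar lam in
  (inC lam alpha theta -> form_ge (Ric Rt) c) /\
  (inCint lam alpha theta -> form_gt (Ric Rt) c).
Proof.
move=> /[dup] /andP[alpha_ge alpha_lt] alpha_range c.
have n_ge3 : 3 <= nR by rewrite (ler_nat R 3 n).
have gap := natr_lt_dimS20 R n_gt2.
apply: (Ric_bound_of_psum (K := (NR - alpha) * (nR + 1) / ((NR - nR) * (nR - 1)))
  (M := ((alpha - nR) * NR - (NR - alpha)) / (NR - nR) * lambar lam)).
- lra.
- by apply: divr_gt0; apply: mulr_gt0; lra.
- by rewrite /c dimS20E //; rewrite dimS20E // in alpha_lt gap; field; lra.
- by move=> u u1; apply: psum_le_large.
Qed.

End InterpolatedWeights.

Unset Implicit Arguments.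
Set Strict Implicit.

Theorem proposition3p1 (R : realType) (n : nat) (Rt : tensor4 R n)
  (h : 'I_(dimS20 n) -> 'M[R]_n) (lam : 'I_(dimS20 n) -> R) (alpha theta : R) :
  (3 <= n)%N -> -1 < theta -> is_alg_curv Rt -> sorted_eigbasis Rt h lam ->
  let c1 := (n%:R - 1) / (alpha + 1) * (1 - alpha * theta) * lambar lam in
  let c2 := (n%:R - 1) *
      ((n%:R ^+ 2 - n%:R * (alpha * theta + alpha - 1) + 2 * (alpha * theta - 1))
       / (n%:R ^+ 2 + n%:R - 2 * (alpha + 1))) * lambar lam in
  [/\ (1 <= alpha <= n%:R -> inC lam alpha theta -> form_ge (Ric Rt) c1),
      (1 <= alpha <= n%:R -> inCint lam alpha theta -> form_gt (Ric Rt) c1),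
      (n%:R <= alpha < (dimS20 n)%:R -> inC lam alpha theta -> form_ge (Ric Rt) c2) &
      (n%:R <= alpha < (dimS20 n)%:R -> inCint lam alpha theta -> form_gt (Ric Rt) c2)].
Proof.
(* The bounds hold for every theta. *)
move=> n_gt2 _ Rt_curv [h_st h_orth h_eig lam_sorted] c1 c2.
have h_sym a : (h a)^T = h a by case: (h_st a).
have h_tr a : \tr (h a) = 0 by case: (h_st a).
have small := Ric_bound_small h_sym h_tr h_orth h_eig lam_sorted Rt_curv n_gt2 theta.
have large := Ric_bound_large h_sym h_tr h_orth h_eig lam_sorted Rt_curv n_gt2 theta.
by split=> [/small[]|/small[]|/large[]|/large[]].
Qed.
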